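(* Let $G=(V,E)$ be an undirected unweighted graph with $n$ vertices, let $k\ge 1$ be an integer, and let $H=(V,E')$ with $E'\subseteq E$ be a $k$-spanner of $G$ whose girth is at least $k+2$. Then there exists a total ordering $\sigma$ of $E$ such that the greedy algorithm run on input $\langle G,k\rangle$ with edge ordering $\sigma$ outputs exactly $H$.
   Context: All graphs are undirected and unweighted. For a graph $G=(V,E)$ with $n$ vertices and an integer $k$, a $k$-spanner of $G$ is a subgraph $H=(V,E')$, $E'\subseteq E$, such that $\mathrm{dist}_H(u,v)\le k\cdot \mathrm{dist}_G(u,v)$ for all $(u,v)\in V\times V$. The girth of a graph is the length of its shortest cycle ($+\infty$ if it is acyclic). The greedy algorithm on input $\langle G,k\rangle$ with a total ordering $\sigma=(e_1<\dots<e_m)$ of $E$: start with $H=(V,\emptyset)$; for $i=1,\dots,m$, with $e_i=(u,v)$, add $e_i$ to $H$ if $\mathrm{dist}_H(u,v)>k$ (current $H$), otherwise do nothing; output the final $H$. *)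

From mathcomp Require Import all_boot.
From Stdlib Require Import ClassicalEpsilon.
Set Implicit Arguments. Unset Strict Implicit. Unset Printing Implicit Defensive.

(* A simple undirected graph on the vertex set T (a finType, n = #|T|) is
   given by its edge set, a set of 2-element subsets of T. *)
Definition simple_edges (T : finType) (E : {set {set T}}) : Prop :=
  forall e, e \in E -> #|e| = 2.

Definition adj (T : finType) (F : {set {set T}}) : rel T :=
  fun x y => [set x; y] \in F.

(* dist_F(u,v) <= d : there is a walk from u to v with at most d edges of F.
   (dist_F(u,v) = +oo when no such walk exists for any d.) *)
Definition dist_le (T : finType) (F : {set {set T}}) (u v : T) (d : nat) : Prop :=
  exists p : seq T, [/\ path (adj F) u p, last u p = v & size p <= d].

(* H is a k-spanner of G=(T,E): dist_H(u,v) <= k * dist_G(u,v) for all u v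
   (vacuous when dist_G(u,v) = +oo). *)
Definition is_spanner (T : finType) (E H : {set {set T}}) (k : nat) : Prop :=
  H \subset E /\
  forall u v d, dist_le E u v d -> dist_le H u v (k * d).

(* girth(F) >= g : every cycle (closed walk through >= 3 pairwise distinct
   vertices) has length >= g. *)
Definition girth_ge (T : finType) (F : {set {set T}}) (g : nat) : Prop :=
  forall c : seq T, uniq c -> 3 <= size c -> cycle (adj F) c -> g <= size c.

Definition edge_within (T : finType) (F : {set {set T}}) (e : {set T}) (k : nat) : bool :=
  if excluded_middle_informative
       (exists u v, e = [set u; v] /\ dist_le F u v k)
  then true else false.

Definition greedy (T : finType) (k : nat) (s : seq {set T}) : {set {set T}} :=
  foldl (fun F e => if edge_within F e k then F else e |: F) set0 s.

(** Feed the edges of H to the greedy algorithm first and the remaining edges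
    of G afterwards.  While an edge uv of H is processed, the current graph is
    a subgraph of H not containing uv; a u-v walk of length at most k in it
    would close up with uv to a cycle of length at most k+1 in H, which the
    girth bound forbids, so every edge of H is kept.  After that phase the
    current graph is H itself, and since H is a k-spanner the endpoints of
    every remaining edge are at H-distance at most k, so all of them are
    discarded. *)

From mathcomp Require Import all_boot.
From Stdlib Require Import ClassicalEpsilon.
Set Implicit Arguments. Unset Strict Implicit.

Lemma dist_le_sub (T : finType) (F F' : {set {set T}}) u v d :
  F \subset F' -> dist_le F u v d -> dist_le F' u v d.
Proof.
move=> sFF' [p [Fp pv sz_p]]; exists p; split=> //.
by apply: sub_path Fp => x y; apply: (subsetP sFF').
Qed.

Lemma girth_edge_far (T : finType) (H : {set {set T}}) (k : nat) (u v : T) :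
  girth_ge H k.+2 -> u != v -> [set u; v] \in H ->
  ~ dist_le (H :\ [set u; v]) u v k.
Proof.
move=> gH neq_uv Huv [p [Hp pv sz_p]].
case: (shortenP Hp) pv => q Hq uq_uq sub_qp qv.
have sz_q : size q <= k.
  by apply: leq_trans sz_p; apply: uniq_leq_size sub_qp; case/andP: uq_uq.
have sz_q2 : 2 <= size q. (* a one-edge walk would be the removed edge uv *)
  case: q Hq uq_uq qv {sz_q sub_qp} => [|w [|? ?]] //= => [_ _ vu|].
    by rewrite vu eqxx in neq_uv.
  by rewrite andbT /adj => Huw _ wv; rewrite -wv !inE eqxx in Huw.
have cyc : cycle (adj H) (u :: q).
  rewrite /cycle rcons_path qv /adj setUC Huv andbT.
  by apply: sub_path Hq => x y; rewrite /adj !inE => /andP[].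
by have := gH _ uq_uq sz_q2 cyc; rewrite ltnNge ltnS sz_q.
Qed.

Section Greedy.
Variables (T : finType) (k : nat).
Implicit Types (E F H : {set {set T}}) (e : {set T}) (s : seq {set T}).

Definition greedy_step F e := if edge_within F e k then F else e |: F.

Lemma greedyE s : greedy k s = foldl greedy_step set0 s.
Proof. by []. Qed.

Lemma edge_withinP F e :
  reflect (exists u v, e = [set u; v] /\ dist_le F u v k) (edge_within F e k).
Proof. by rewrite /edge_within; case: excluded_middle_informative; constructor. Qed.

Lemma greedy_step_add H F e :
  girth_ge H k.+2 -> #|e| = 2 -> e \in H -> F \subset H :\ e ->
  greedy_step F e = e |: F.
Proof.
move=> gH card_e He sFH; rewrite /greedy_step.
case: edge_withinP => // -[u [v [e_uv dFuv]]].
rewrite {}e_uv in card_e He sFH.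
have neq_uv : u != v by apply: contra_eqN card_e => /eqP->; rewrite setUid cards1.
by case: (girth_edge_far gH neq_uv He); apply: dist_le_sub dFuv.
Qed.

Lemma greedy_step_spanner E H e :
  simple_edges E -> is_spanner E H k -> e \in E -> greedy_step H e = H.
Proof.
move=> hE [_ spanH] Ee; rewrite /greedy_step.
case: edge_withinP => // far_e; case: far_e.
have /eqP/cards2P[u [v [_ e_uv]]] := hE e Ee.
exists u, v; split=> //; rewrite -[k]muln1; apply: spanH.
by exists [:: v]; rewrite /= /adj -e_uv Ee.
Qed.

Lemma foldl_greedy_add H F s :
  girth_ge H k.+2 -> simple_edges H -> uniq s ->
  F \subset H -> {subset s <= [predD H & F]} ->
  foldl greedy_step F s = F :|: [set e in s].
Proof.
move=> gH hH; elim: s F => [|e s IHs] F /= => [_ _ _|/andP[s'e uniq_s] sFH sHF].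
  by apply/setP => x; rewrite !inE orbF.
have /andP[F'e He] : e \in [predD H & F] by apply: sHF; rewrite mem_head.
rewrite (greedy_step_add gH (hH e He) He); last first.
  apply/subsetP => x Fx; rewrite !inE (subsetP sFH) // andbT.
  by apply: contraNneq F'e => <-.
rewrite IHs //; first by apply/setP => x; rewrite !inE orbCA orbA.
  by rewrite subUset sub1set He.
move=> x sx; have /andP[F'x Hx] : x \in [predD H & F] by apply: sHF; rewrite inE sx orbT.
by rewrite !inE negb_or F'x Hx !andbT; apply: contraNneq s'e => <-.
Qed.

Lemma foldl_greedy_spanner E H s :
  simple_edges E -> is_spanner E H k -> {subset s <= E} ->
  foldl greedy_step H s = H.
Proof.
move=> hE spanH; elim: s => [|e s IHs] //= sE.
rewrite (greedy_step_spanner hE spanH) ?sE ?mem_head //.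
by apply: IHs => x sx; apply: sE; rewrite inE sx orbT.
Qed.

End Greedy.

Lemma perm_enum_setD (T : finType) (A B : {set T}) :
  A \subset B -> perm_eq (enum A ++ enum (B :\: A)) (enum B).
Proof.
move=> sAB; apply: uniq_perm; rewrite ?enum_uniq //.
  rewrite cat_uniq !enum_uniq andbT /=; apply/hasPn => x.
  by rewrite !mem_enum inE => /andP[].
move=> x; rewrite mem_cat !mem_enum inE.
by case: (boolP (x \in A)) => [/(subsetP sAB)->|].
Qed.

Theorem proposition1p3 (T : finType) (E H : {set {set T}}) (k : nat) :
  simple_edges E -> 1 <= k ->
  H \subset E -> is_spanner E H k -> girth_ge H k.+2 ->
  exists s : seq {set T}, perm_eq s (enum E) /\ greedy k s = H.
Proof.
move=> hE _ sHE spanH gH.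
have hH : simple_edges H by move=> e He; apply: hE; apply: (subsetP sHE).
exists (enum H ++ enum (E :\: H)); split; first exact: perm_enum_setD.
rewrite greedyE foldl_cat.
rewrite (foldl_greedy_add gH hH (enum_uniq _) (sub0set _)); last first.
  by move=> e; rewrite mem_enum !inE => ->.
rewrite set0U set_enum (foldl_greedy_spanner hE spanH) // => e.
by rewrite mem_enum inE => /andP[].
Qed.
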